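(* Let $f$ be a $C^1$ diffeomorphism of $M=\mathbb{R}^d/\mathbb{Z}^d$ and let $\mathbf{x}\in M^{\mathbb{Z}}$ (not necessarily an orbit). Suppose that for some positive integer $n$ and constant $c_4>0$, for every $k\in\mathbb{Z}$ the operator $\Gamma_{S^k\mathbf{x}}$ is invertible on $X_n$ with $\|\Gamma_{S^k\mathbf{x}}^{-1}\|_n\le c_4$. Then $\Gamma_{\mathbf{x}}$ is invertible on $X_\infty$ and $$\|\Gamma_{\mathbf{x}}^{-1}\|_\infty\le \frac{2c_4d\sqrt d}{1-e^{-1/n}}.$$
   Context: For $\mathbf{x}=(x_k)\in M^{\mathbb{Z}}$, $(\Gamma_{\mathbf{x}}\eta)_k=\eta_k-Df(x_{k-1})\eta_{k-1}$ on sequences $\eta=(\eta_k)_{k\in\mathbb{Z}}$ in $\mathbb{R}^d$ (tangent spaces identified with $\mathbb{R}^d$, $|\cdot|$ Euclidean norm). $S$ is the shift $(S\mathbf{x})_k=x_{k-1}$. $\|\eta\|_n=\sup_k e^{-|k|/n}|\eta_k|$, $X_n=\{\|\eta\|_n<\infty\}$, $X_\infty$ bounded sequences with sup norm; operator norms are denoted by the same symbols. *)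

From Stdlib Require Import Reals ZArith.
From mathcomp Require Import ssreflect ssrfun ssrbool eqtype ssrnat seq fintype bigop.

Set Implicit Arguments.
Unset Strict Implicit.

Local Open Scope R_scope.

Definition vec (d : nat) := 'I_d -> R.
Definition mat (d : nat) := 'I_d -> 'I_d -> R.

Definition vsum (d : nat) (g : 'I_d -> R) : R := \big[Rplus/0%R]_(i < d) g i.

Definition vnorm (d : nat) (v : vec d) : R := sqrt (vsum (fun i => v i * v i)).

Definition mv (d : nat) (A : mat d) (v : vec d) : vec d :=
  fun i => vsum (fun j => A i j * v j).
Definition vadd (d : nat) (u v : vec d) : vec d := fun i => u i + v i.
Definition vsub (d : nat) (u v : vec d) : vec d := fun i => u i - v i.

Definition has_fderiv (d : nat) (F : vec d -> vec d) (DF : vec d -> mat d) : Prop :=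
  forall x eps, 0 < eps -> exists delta, 0 < delta /\
    forall h : vec d, vnorm h < delta ->
      vnorm (fun i => F (vadd x h) i - F x i - mv (DF x) h i) <= eps * vnorm h.

Definition mat_continuous (d : nat) (DF : vec d -> mat d) : Prop :=
  forall x eps, 0 < eps -> exists delta, 0 < delta /\
    forall y, vnorm (vsub y x) < delta ->
      forall i j, Rabs (DF y i j - DF x i j) < eps.

Definition C1_with_deriv (d : nat) (F : vec d -> vec d) (DF : vec d -> mat d) : Prop :=
  has_fderiv F DF /\ mat_continuous DF.

Definition is_int (r : R) : Prop := exists z : Z, r = IZR z.
Definition int_vec (d : nat) (m : vec d) : Prop := forall i, is_int (m i).

(* F : R^d -> R^d descends to a map of the torus M = R^d / Z^d *)
Definition torus_lift (d : nat) (F : vec d -> vec d) : Prop :=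
  forall x m, int_vec m -> int_vec (vsub (F (vadd x m)) (F x)).

(* F (with Jacobian DF) is a lift of a C^1 diffeomorphism f of M = R^d/Z^d:
   F is C^1, descends to M, and there is a C^1 lift G of the inverse map. *)
Definition C1_torus_diffeo (d : nat) (F : vec d -> vec d) (DF : vec d -> mat d) : Prop :=
  C1_with_deriv F DF /\ torus_lift F /\
  exists (G : vec d -> vec d) (DG : vec d -> mat d),
    C1_with_deriv G DG /\ torus_lift G /\
    (forall x, int_vec (vsub (G (F x)) x)) /\
    (forall x, int_vec (vsub (F (G x)) x)).

(* Sequences indexed by Z; points of M^Z are represented by lifts in R^d
   (Df at a point of M is the Jacobian DF of the lift at any lift). *)
Definition vseq (d : nat) := Z -> vec d.

Definition Gamma (d : nat) (DF : vec d -> mat d) (x : vseq d) (eta : vseq d) : vseq d :=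
  fun k i => eta k i - mv (DF (x (k - 1)%Z)) (eta (k - 1)%Z) i.

(* S^k x, where (S x)_j = x_{j-1}; so (S^k x)_j = x_{j-k}, k in Z *)
Definition shiftk (d : nat) (x : vseq d) (k : Z) : vseq d := fun j => x (j - k)%Z.

(* weights: ||eta||_n = sup_k e^{-|k|/n} |eta_k|, ||eta||_infty = sup_k |eta_k| *)
Definition weight_n (n : nat) (k : Z) : R := exp (- IZR (Z.abs k) / INR n).
Definition weight_inf (k : Z) : R := 1.

Definition norm_le (d : nat) (w : Z -> R) (eta : vseq d) (B : R) : Prop :=
  forall k, w k * vnorm (eta k) <= B.

Definition in_X (d : nat) (w : Z -> R) (eta : vseq d) : Prop :=
  exists B, norm_le w eta B.

Definition invertible_with_bound (d : nat) (w : Z -> R) (T : vseq d -> vseq d) (c : R) : Prop :=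
  (exists C, forall eta B, in_X w eta -> norm_le w eta B -> norm_le w (T eta) (C * B)) /\
  exists Tinv : vseq d -> vseq d,
    (forall xi, in_X w xi -> in_X w (Tinv xi) /\ T (Tinv xi) = xi) /\
    (forall eta, in_X w eta -> Tinv (T eta) = eta) /\
    (forall xi B, in_X w xi -> norm_le w xi B -> norm_le w (Tinv xi) (c * B)).

(* Let T be the inverse of Gamma_x on X_n.  Since X_infty is
   contained in X_n with ||.||_n <= ||.||_infty, T is defined on X_infty and
   inverts Gamma_x there; it remains to see that T maps X_infty into itself
   with the announced bound.  Shifting commutes with Gamma
   (Gamma_{S^k x} S^k = S^k Gamma_x), so the k-th term of T xi is the 0-th
   term of the inverse of Gamma_{S^{-k} x} applied to S^{-k} xi; the weight
   at index 0 is 1, whence |(T xi)_k| <= c4 ||xi||_infty, which is even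
   better than the stated constant.  Boundedness of Gamma_x on X_infty
   follows from boundedness on X_n: testing Gamma_x on sequences supported
   at one index shows that the matrices Df(x_m) are uniformly bounded. *)
From Stdlib Require Import Reals ZArith.
From mathcomp Require Import ssreflect ssrfun ssrbool eqtype ssrnat seq fintype bigop.
From Stdlib Require Import Lra Lia FunctionalExtensionality.

Set Implicit Arguments.
Unset Strict Implicit.
Local Open Scope R_scope.

Lemma vsum_le d (f g : 'I_d -> R) : (forall i, f i <= g i) -> vsum f <= vsum g.
Proof.
move=> fg; rewrite /vsum; apply: (big_ind2 (fun a b => a <= b)) => //; first lra.
by move=> *; lra.
Qed.

Lemma vsum_nonneg d (f : 'I_d -> R) : (forall i, 0 <= f i) -> 0 <= vsum f.
Proof.
move=> f_ge0; rewrite /vsum; apply: (big_ind (fun a => 0 <= a)) => //; first lra.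
by move=> *; lra.
Qed.

Lemma vsum_lin d (f g : 'I_d -> R) a b :
  vsum (fun i => a * f i + b * g i) = a * vsum f + b * vsum g.
Proof.
rewrite /vsum; apply: (big_rec3 (fun s t u => s = a * t + b * u)); first ring.
by move=> i s t u _ ->; ring.
Qed.

Lemma vsum_ext d (f g : 'I_d -> R) : (forall i, f i = g i) -> vsum f = vsum g.
Proof. by move=> fg; rewrite /vsum; apply: eq_bigr => i _; exact: fg. Qed.

Lemma vnorm_nonneg d (v : vec d) : 0 <= vnorm v.
Proof. exact: sqrt_pos. Qed.

Lemma vnorm_zero d : vnorm (fun _ : 'I_d => 0) = 0.
Proof.
rewrite /vnorm (vsum_ext (g := fun i => 0 * 0 + 0 * 0)); last by move=> i; ring.
by rewrite vsum_lin Rmult_0_l Rplus_0_l sqrt_0.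
Qed.

Lemma vnorm_opp d (v : vec d) : vnorm (fun i => 0 - v i) = vnorm v.
Proof. by rewrite /vnorm; f_equal; apply: vsum_ext => i; ring. Qed.

(* A crude triangle inequality, sufficient for operator bounds. *)
Lemma vnorm_sub_le d (u v : vec d) :
  vnorm (fun i => u i - v i) <= 2 * (vnorm u + vnorm v).
Proof.
have nu := vnorm_nonneg u; have nv := vnorm_nonneg v.
have square w : vsum (fun i => w i * w i) = vnorm w ^ 2.
  by rewrite /vnorm pow2_sqrt //; apply: vsum_nonneg => i; nra.
rewrite {1}/vnorm -[X in _ <= X]sqrt_pow2; last lra.
apply: sqrt_le_1_alt.
apply: (Rle_trans _ (vsum (fun i => 2 * (u i * u i) + 2 * (v i * v i)))).
  by apply: vsum_le => i /=; have := pow2_ge_0 (u i + v i); lra.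
by rewrite vsum_lin !square; nra.
Qed.

Lemma vnorm_dim0 (v : vec 0) : vnorm v = 0.
Proof. by rewrite /vnorm /vsum big_ord0 sqrt_0. Qed.

Lemma norm_le_bound_nonneg d w (eta : vseq d) B :
  (forall k, 0 <= w k) -> norm_le w eta B -> 0 <= B.
Proof.
move=> w_ge0 eta_le; have := eta_le 0%Z; have := w_ge0 0%Z.
by have := vnorm_nonneg (eta 0%Z); nra.
Qed.

Lemma norm_le_weight_mono d (w w' : Z -> R) (eta : vseq d) B :
  (forall k, 0 <= w k <= w' k) -> norm_le w' eta B -> norm_le w eta B.
Proof.
move=> ww' eta_le k; have := eta_le k; have := ww' k.
by have := vnorm_nonneg (eta k); nra.
Qed.

Lemma exp_le_compat a b : a <= b -> exp a <= exp b.
Proof.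
by case/Rle_lt_or_eq_dec => [ab | ->]; [left; exact: exp_increasing | right].
Qed.

Section Weights.

Variable n : nat.
Hypothesis n_gt0 : (0 < n)%nat.

Lemma INR_n_pos : 0 < INR n.
Proof. by apply: lt_0_INR; apply/ssrnat.ltP. Qed.

Lemma weight_n_pos k : 0 < weight_n n k.
Proof. exact: exp_pos. Qed.

Lemma weight_n_0 : weight_n n 0 = 1.
Proof. by rewrite /weight_n /= Ropp_0 /Rdiv Rmult_0_l exp_0. Qed.

Lemma weight_n_le_inf k : 0 <= weight_n n k <= weight_inf k.
Proof.
split; first exact: Rlt_le (weight_n_pos k).
rewrite /weight_n /weight_inf -exp_0; apply: exp_le_compat.
have := Rinv_0_lt_compat _ INR_n_pos.
have : 0 <= IZR (Z.abs k) by apply: IZR_le; lia.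
by rewrite /Rdiv; nra.
Qed.

Lemma weight_n_shift a b :
  weight_n n a <= exp (IZR (Z.abs (a - b)) / INR n) * weight_n n b.
Proof.
rewrite /weight_n -exp_plus; apply: exp_le_compat.
have : IZR (Z.abs b) <= IZR (Z.abs a) + IZR (Z.abs (a - b)).
  by rewrite -plus_IZR; apply: IZR_le; lia.
have := Rinv_0_lt_compat _ INR_n_pos.
by rewrite /Rdiv; nra.
Qed.

Lemma norm_le_inf_n d (xi : vseq d) B :
  norm_le weight_inf xi B -> norm_le (weight_n n) xi B.
Proof. exact: norm_le_weight_mono weight_n_le_inf. Qed.

End Weights.

Lemma shiftk0 d (x : vseq d) : shiftk x 0 = x.
Proof. by apply: functional_extensionality => j; rewrite /shiftk Z.sub_0_r. Qed.

Lemma Gamma_shiftk d DF (x eta : vseq d) k :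
  Gamma DF (shiftk x k) (shiftk eta k) = shiftk (Gamma DF x eta) k.
Proof.
apply: functional_extensionality => j; rewrite /Gamma /shiftk.
by replace (j - 1 - k)%Z with (j - k - 1)%Z by lia.
Qed.

Lemma in_X_shiftk d n (eta : vseq d) k : (0 < n)%nat ->
  in_X (weight_n n) eta -> in_X (weight_n n) (shiftk eta k).
Proof.
move=> n_gt0 [B eta_le]; exists (exp (IZR (Z.abs k) / INR n) * B) => j.
have w_shift := weight_n_shift n_gt0 j (j - k)%Z.
replace (j - (j - k))%Z with k in w_shift by lia.
have := eta_le (j - k)%Z; have := vnorm_nonneg (eta (j - k)%Z).
by have := exp_pos (IZR (Z.abs k) / INR n); rewrite /shiftk; nra.
Qed.

Lemma norm_le_inf_shiftk d (xi : vseq d) B k :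
  norm_le weight_inf xi B -> norm_le weight_inf (shiftk xi k) B.
Proof. by move=> xi_le j; exact: (xi_le (j - k)%Z). Qed.

Definition delta_seq d (m : Z) (v : vec d) : vseq d :=
  fun j => if Z.eq_dec j m then v else fun _ => 0.

Lemma norm_le_delta_seq d n m (v : vec d) :
  norm_le (weight_n n) (delta_seq m v) (weight_n n m * vnorm v).
Proof.
move=> j; rewrite /delta_seq.
case: (Z.eq_dec j m) => [j_m | _] /=; first by rewrite j_m; lra.
by rewrite vnorm_zero; have := weight_n_pos n m; have := vnorm_nonneg v; nra.
Qed.

Lemma Gamma_delta_seq d DF (x : vseq d) m v :
  Gamma DF x (delta_seq m v) (m + 1)%Z = fun i => 0 - mv (DF (x m)) v i.
Proof.
rewrite /Gamma /delta_seq; replace (m + 1 - 1)%Z with m by lia.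
case: (Z.eq_dec (m + 1) m) => [|_] /=; first lia.
by case: (Z.eq_dec m m).
Qed.

Lemma Gamma_bounded_coeff d DF (x : vseq d) n C : (0 < n)%nat ->
  (forall eta B, in_X (weight_n n) eta -> norm_le (weight_n n) eta B ->
     norm_le (weight_n n) (Gamma DF x eta) (C * B)) ->
  forall m v, vnorm (mv (DF (x m)) v) <= Rabs C * exp (1 / INR n) * vnorm v.
Proof.
move=> n_gt0 Gamma_bd m v.
have delta_le := norm_le_delta_seq n m v.
have := Gamma_bd _ _ (ex_intro _ _ delta_le) delta_le (m + 1)%Z.
rewrite Gamma_delta_seq vnorm_opp => image_le.
have w_shift := weight_n_shift n_gt0 m (m + 1)%Z.
replace (m - (m + 1))%Z with (-1)%Z in w_shift by lia.
rewrite /= in w_shift.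
have w1 := weight_n_pos n (m + 1)%Z; have w0 := weight_n_pos n m.
have nv := vnorm_nonneg v; have C_le := Rle_abs C; have C_ge0 := Rabs_pos C.
have E_pos := exp_pos (1 / INR n).
apply: (Rmult_le_reg_l (weight_n n (m + 1))) => //.
apply: (Rle_trans _ _ _ image_le).
apply: (Rle_trans _ (Rabs C * (weight_n n m * vnorm v))).
  by apply: Rmult_le_compat_r => //; apply: Rmult_le_pos; lra.
have : weight_n n m * vnorm v <= exp (1 / INR n) * weight_n n (m + 1) * vnorm v
  by apply: Rmult_le_compat_r.
move/(Rmult_le_compat_l (Rabs C) _ _ C_ge0); lra.
Qed.

Lemma Gamma_bounded_inf d DF (x : vseq d) K : 0 <= K ->
  (forall m v, vnorm (mv (DF (x m)) v) <= K * vnorm v) ->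
  forall eta B, norm_le weight_inf eta B ->
    norm_le weight_inf (Gamma DF x eta) (2 * (1 + K) * B).
Proof.
move=> K_ge0 DF_bd eta B eta_le k.
have B_ge0 := norm_le_bound_nonneg (fun _ => Rle_0_1) eta_le.
have eta_k := eta_le k; have eta_prev := eta_le (k - 1)%Z.
rewrite /weight_inf !Rmult_1_l in eta_k eta_prev * ; rewrite /Gamma.
apply: (Rle_trans _ _ _ (vnorm_sub_le _ _)).
have := DF_bd (k - 1)%Z (eta (k - 1)%Z).
have : K * vnorm (eta (k - 1)%Z) <= K * B by apply: Rmult_le_compat_l.
lra.
Qed.

(* Indeed S^{-k} (T xi) is the preimage of S^{-k} xi under Gamma_{S^{-k} x},
   and its 0-th term carries weight 1. *)
Lemma inverse_pointwise_bound d DF (x : vseq d) n c (T : vseq d -> vseq d) :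
  (0 < n)%nat ->
  (forall xi, in_X (weight_n n) xi -> in_X (weight_n n) (T xi) /\ Gamma DF x (T xi) = xi) ->
  (forall j, invertible_with_bound (weight_n n) (Gamma DF (shiftk x j)) c) ->
  forall xi B, norm_le weight_inf xi B -> forall k, vnorm (T xi k) <= c * B.
Proof.
move=> n_gt0 T_inv Gamma_inv xi B xi_le k.
have xi_in : in_X (weight_n n) xi by exists B; exact: norm_le_inf_n.
have [Txi_in Gamma_Txi] := T_inv _ xi_in.
have [_ [Ts [_ [Ts_left Ts_bd]]]] := Gamma_inv (- k)%Z.
have Ts_shift : Ts (shiftk xi (- k)) = shiftk (T xi) (- k).
  by rewrite -{1}Gamma_Txi -Gamma_shiftk Ts_left //; exact: in_X_shiftk.
have shift_le : norm_le (weight_n n) (shiftk xi (- k)) B.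
  by apply: norm_le_inf_n => //; exact: norm_le_inf_shiftk.
have := Ts_bd _ _ (ex_intro _ _ shift_le) shift_le 0%Z.
rewrite Ts_shift /shiftk weight_n_0 Rmult_1_l.
by replace (0 - - k)%Z with k by lia.
Qed.

(* The constant of the lemma dominates c, so a bound by c B implies it
   (in dimension 0 both sides vanish). *)
Lemma bound_weaken d (v : vec d) n c B : (0 < n)%nat -> 0 < c -> 0 <= B ->
  vnorm v <= c * B ->
  vnorm v <= 2 * c * INR d * sqrt (INR d) / (1 - exp (- 1 / INR n)) * B.
Proof.
move=> n_gt0 c_pos B_ge0 v_le.
case: d v v_le => [|d'] v v_le; first by rewrite vnorm_dim0 /= Rmult_0_r; lra.
apply: (Rle_trans _ _ _ v_le); apply: Rmult_le_compat_r => //.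
have d_ge1 : 1 <= INR d'.+1 by apply: (le_INR 1); lia.
have sqrt_ge1 : 1 <= sqrt (INR d'.+1) by rewrite -sqrt_1; apply: sqrt_le_1_alt.
have e_lt1 : exp (- 1 / INR n) < 1.
  rewrite -exp_0; apply: exp_increasing.
  by have := Rinv_0_lt_compat _ (INR_n_pos n_gt0); rewrite /Rdiv; nra.
have e_pos := exp_pos (- 1 / INR n).
rewrite /Rdiv; apply: (Rmult_le_reg_r (1 - exp (- 1 / INR n))); first lra.
rewrite Rmult_assoc Rinv_l; last lra.
have : 1 <= INR d'.+1 * sqrt (INR d'.+1) by nra.
nra.
Qed.

Theorem lemma2p3 (d : nat) (F : vec d -> vec d) (DF : vec d -> mat d)
  (x : vseq d) (n : nat) (c4 : R) :
  C1_torus_diffeo F DF ->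
  (0 < n)%nat ->
  (0 < c4)%R ->
  (forall k : Z, invertible_with_bound (weight_n n) (Gamma DF (shiftk x k)) c4) ->
  invertible_with_bound weight_inf (Gamma DF x)
    (2 * c4 * INR d * sqrt (INR d) / (1 - exp (- 1 / INR n)))%R.
Proof.
move=> _ n_gt0 c4_pos Gamma_inv.
have := Gamma_inv 0%Z; rewrite shiftk0 => -[[C Gamma_bd] [T [T_right [T_left T_bd]]]].
have DF_bd := Gamma_bounded_coeff n_gt0 Gamma_bd.
have K_ge0 : 0 <= Rabs C * exp (1 / INR n).
  by apply: Rmult_le_pos; [exact: Rabs_pos | exact: Rlt_le (exp_pos _)].
have T_pointwise := inverse_pointwise_bound n_gt0 T_right Gamma_inv.
split; first by exists (2 * (1 + Rabs C * exp (1 / INR n))) => eta B _;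
  exact: Gamma_bounded_inf.
exists T; split; [|split].
- move=> xi [B xi_le].
  have xi_in : in_X (weight_n n) xi by exists B; exact: norm_le_inf_n.
  split; last exact: (T_right _ xi_in).2.
  by exists (c4 * B) => k; rewrite /weight_inf Rmult_1_l; exact: T_pointwise.
- by move=> eta [B eta_le]; apply: T_left; exists B; exact: norm_le_inf_n.
- move=> xi B _ xi_le k; rewrite /weight_inf Rmult_1_l.
  apply: bound_weaken => //; last exact: T_pointwise.
  exact: norm_le_bound_nonneg (fun _ => Rle_0_1) xi_le.
Qed.
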